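(* Let $I$ be a nontrivial ideal of $\mathbb{N}\times\mathbb{N}$ containing all sets of the form $H\times\mathbb{N}$ with $H$ a finite subset of $\mathbb{N}$. If $(X,\tau)$ is $I$-sequentially compact in the sense of double sequences, then $(X,\tau)$ is countably compact.
   Context: An ideal $I$ on $\mathbb{N}\times\mathbb{N}$ is a family of subsets closed under finite unions and under taking subsets; it is nontrivial if $I\ne\{\emptyset\}$ and $\mathbb{N}\times\mathbb{N}\notin I$. $y\in X$ is an $I$-cluster point of a double sequence $\{x_{ij}\}$ in $X$ if for every open $U\ni y$, $\{(m,n)\in\mathbb{N}\times\mathbb{N}: x_{mn}\in U\}\notin I$. $(X,\tau)$ is $I$-sequentially compact in the sense of double sequences if every double sequence in $X$ has an $I$-cluster point. *)

From Stdlib Require Import Classical.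

Definition set (T : Type) := T -> Prop.

Record topology (X : Type) := {
  is_open : set X -> Prop;
  open_full : is_open (fun _ => True);
  open_empty : is_open (fun _ => False);
  open_inter : forall U V, is_open U -> is_open V -> is_open (fun x => U x /\ V x);
  open_union : forall (F : set X -> Prop),
      (forall U, F U -> is_open U) -> is_open (fun x => exists U, F U /\ U x)
}.
Arguments is_open {X} t U.

Definition is_ideal (I : set (nat * nat) -> Prop) : Prop :=
  I (fun _ => False) /\
  (forall A B, I A -> I B -> I (fun p => A p \/ B p)) /\
  (forall A B, (forall p, B p -> A p) -> I A -> I B).

Definition nontrivial_ideal (I : set (nat * nat) -> Prop) : Prop :=
  is_ideal I /\
  (exists A, I A /\ exists p, A p) /\   (* I <> {emptyset} *)
  ~ I (fun _ => True).

Definition finite_nat (H : set nat) : Prop := exists n, forall k, H k -> k < n.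

Definition I_cluster_point {X : Type} (t : topology X) (I : set (nat * nat) -> Prop)
    (x : nat -> nat -> X) (y : X) : Prop :=
  forall U, is_open t U -> U y -> ~ I (fun p => U (x (fst p) (snd p))).

Definition I_seq_compact_double {X : Type} (t : topology X) (I : set (nat * nat) -> Prop) :=
  forall x : nat -> nat -> X, exists y, I_cluster_point t I x y.

Definition countably_compact {X : Type} (t : topology X) : Prop :=
  forall U : nat -> set X,
    (forall n, is_open t (U n)) ->
    (forall x, exists n, U n x) ->
    exists N, forall x, exists n, n <= N /\ U n x.

(* If X has a countable open cover U with no finite subcover, pick x_N outside
   U_0 ∪ ... ∪ U_N and view it as the double sequence (m, n) ↦ x_m.  For an
   I-cluster point y lying in U_k, the indices (m, n) with x_m ∈ U_k all have
   m < k, so they form a subset of {0, ..., k-1} × N, which lies in I. *)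
From Stdlib Require Import Classical ClassicalEpsilon Lia.

Lemma escaping_sequence {X : Type} (U : nat -> set X) :
  ~ (exists N, forall x, exists n, n <= N /\ U n x) ->
  exists x : nat -> X, forall N n, n <= N -> ~ U n (x N).
Proof.
  intro no_subcover.
  assert (escape : forall N, exists x, forall n, n <= N -> ~ U n x).
  { intro N; apply NNPP; intro covered; apply no_subcover; exists N; intro x.
    apply NNPP; intro uncovered; apply covered; exists x.
    intros n le_nN Unx; apply uncovered; eauto. }
  exists (fun N => proj1_sig (constructive_indefinite_description _ (escape N))).
  intro N; exact (proj2_sig (constructive_indefinite_description _ (escape N))).
Qed.

Lemma ideal_initial_rows (I : set (nat * nat) -> Prop) (A : set (nat * nat)) (k : nat) :
  is_ideal I ->
  (forall H : set nat, finite_nat H -> I (fun p => H (fst p))) ->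
  (forall p, A p -> fst p < k) -> I A.
Proof.
  intros [_ [_ I_sub]] I_rows A_rows.
  apply (I_sub (fun p => fst p < k)); [exact A_rows|].
  apply (I_rows (fun m => m < k)); exists k; auto.
Qed.

Lemma I_cluster_point_rows_frequently {X : Type} (t : topology X)
    (I : set (nat * nat) -> Prop) (x : nat -> X) (y : X) :
  is_ideal I ->
  (forall H : set nat, finite_nat H -> I (fun p => H (fst p))) ->
  I_cluster_point t I (fun m _ => x m) y ->
  forall U, is_open t U -> U y -> forall k, exists m, k <= m /\ U (x m).
Proof.
  intros ideal_I I_rows cluster U U_open Uy k.
  apply NNPP; intro rare; apply (cluster U U_open Uy).
  apply (ideal_initial_rows I _ k ideal_I I_rows).
  intros [m n] Uxm; simpl in *.
  destruct (Compare_dec.lt_dec m k) as [lt_mk | ge_mk]; [exact lt_mk|].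
  exfalso; apply rare; exists m; split; [lia | exact Uxm].
Qed.

Theorem theorem4p4 (I : set (nat * nat) -> Prop) (X : Type) (t : topology X) :
  nontrivial_ideal I ->
  (forall H : set nat, finite_nat H -> I (fun p => H (fst p))) ->
  I_seq_compact_double t I ->
  countably_compact t.
Proof.
  intros [ideal_I _] I_rows compact U U_open U_cover.
  apply NNPP; intro no_subcover.
  destruct (escaping_sequence U no_subcover) as [x x_escapes].
  destruct (compact (fun m _ => x m)) as [y cluster].
  destruct (U_cover y) as [k Uky].
  destruct (I_cluster_point_rows_frequently t I x y ideal_I I_rows cluster
              (U k) (U_open k) Uky k) as [m [le_km Uxm]].
  exact (x_escapes m k le_km Uxm).
Qed.
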